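(* Let $n\in\mathbb{N}$ and $a,b\in\mathbb{C}$ with $b\notin\mathbb{Z}^-$. (i) If $a\neq b+1$, then \[ \sum_{j=0}^{n}\sum_{i=0}^{j}\frac{\binom{n+a+1}{i}}{\binom{n+b}{j}}(-1)^{i-j}=\frac{1}{a-b-1}\left(\frac{(a)_{n+1}}{(b+1)_n}-n-b-1\right); \] in particular for $a=b$ the sum equals $n+1$. (ii) If $a=b+1$, then \[ \sum_{j=0}^{n}\sum_{i=0}^{j}\frac{\binom{n+b+2}{i}}{\binom{n+b}{j}}(-1)^{i-j}=(n+b+1)\big(\psi(n+b+2)-\psi(b+1)\big)=(n+b+1)\sum_{k=1}^{n+1}\frac{1}{b+k}. \]
   Context: For $x\in\mathbb{C}$, $i\in\mathbb{N}$: $\binom{x}{i}=x(x-1)\cdots(x-i+1)/i!$. $\mathbb{Z}^-=\{-1,-2,\dots\}$. Pochhammer symbol: $(\alpha)_0=1$, $(\alpha)_k=\alpha(\alpha+1)\cdots(\alpha+k-1)$. $\psi=\Gamma'/\Gamma$ is the digamma function. *)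

(* Complex numbers are modelled by an arbitrary
   numClosedFieldType (e.g. algC). *)
From HB Require Import structures.
From mathcomp Require Import all_boot all_order all_algebra.
Set Implicit Arguments. Unset Strict Implicit. Unset Printing Implicit Defensive.
Import Order.TTheory GRing.Theory Num.Theory.
Local Open Scope ring_scope.

Definition gbinom {R : fieldType} (x : R) (i : nat) : R :=
  (\prod_(k < i) (x - k%:R)) / (i`!)%:R.

Definition poch {R : ringType} (alpha : R) (k : nat) : R :=
  \prod_(m < k) (alpha + m%:R).

(* the double sum of the theorem, with upper parameter x (= n+a+1) *)
Definition dsum {R : fieldType} (n : nat) (x b : R) : R :=
  \sum_(j < n.+1) \sum_(i < j.+1)
     gbinom x i / gbinom (n%:R + b) j * (-1) ^+ (j - i).

From HB Require Import structures.
From mathcomp Require Import all_boot all_order all_algebra.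
From mathcomp Require Import ring.
Import Order.TTheory GRing.Theory Num.Theory.
Local Open Scope ring_scope.

(* Writing [binom x i = x^(i)/i!] with the falling factorial [x^(i)], the inner
   alternating sum collapses by Pascal's rule to [binom (x-1) j], so the double
   sum becomes [\sum_j A^(j) / B^(j)] with [A = x - 1], [B = n + b].  For such
   sums, [A^(j+1)/B^(j) - A^(j)/B^(j-1) = (A - B - 1) A^(j)/B^(j)], so they
   telescope whenever [A != B + 1]; in the remaining case [A = B + 1] every term
   is [A/(A - j)], which gives the harmonic sum. *)

Section FallingFactorial.

Context {R : fieldType}.
Implicit Types (x A B : R) (i j m N : nat).

Definition falling x i : R := \prod_(k < i) (x - k%:R).

Lemma fallingS x i : falling x i.+1 = falling x i * (x - i%:R).
Proof. by rewrite /falling big_ord_recr. Qed.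

Lemma fallingSr x i : falling x i.+1 = x * falling (x - 1) i.
Proof.
rewrite /falling big_ord_recl subr0; congr (_ * _); apply: eq_bigr => k _.
by rewrite /bump /= -natr1; ring.
Qed.

Lemma falling_shift_poch x N : falling (x + N%:R) N = poch (x + 1) N.
Proof.
rewrite /falling (reindex_inj rev_ord_inj); apply: eq_bigr => k _ /=.
by rewrite natrB ?ltn_ord // -natr1; ring.
Qed.

Lemma falling_neq0_leq x {i m} : (i <= m)%N -> falling x m != 0 -> falling x i != 0.
Proof.
elim: m => [|m IHm]; first by rewrite leqn0 => /eqP ->.
rewrite leq_eqVlt ltnS => /predU1P[-> // | lt_im].
by rewrite fallingS mulf_eq0 negb_or => /andP[/(IHm lt_im)].
Qed.

Lemma falling_ratio A j :
  falling (A - 1) j != 0 -> A - j%:R != 0 ->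
  falling A j / falling (A - 1) j = A / (A - j%:R).
Proof.
move=> nz_f nz_Aj.
have eq_prod : falling A j * (A - j%:R) = A * falling (A - 1) j.
  by rewrite -fallingS fallingSr.
by apply: (mulIf nz_Aj); rewrite mulrAC eq_prod mulfK // divfK.
Qed.

Lemma falling_ratio_telescope A B m :
  falling B m != 0 ->
  \sum_(j < m.+1) falling A j / falling B j * (A - B - 1)
    = falling A m.+1 / falling B m - (B + 1).
Proof.
elim: m => [|m IHm] nz_fB.
  by rewrite big_ord1 !fallingS /falling !big_ord0 !mul1r subr0 !divr1 invr1 mul1r opprD addrA.
have := nz_fB; rewrite fallingS mulf_eq0 negb_or => /andP[nz_fBm nz_Bm].
rewrite big_ord_recr /= IHm // !fallingS -natr1.
by field; rewrite nz_fBm nz_Bm.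
Qed.

End FallingFactorial.

Section GeneralizedBinomial.

Context {R : numFieldType}.
Implicit Types (x b : R) (i j n : nat).

Lemma gbinomE x i : gbinom x i = falling x i / (i`!)%:R.
Proof. by []. Qed.

Lemma gbinom_pascal x j : gbinom x j.+1 = gbinom (x - 1) j.+1 + gbinom (x - 1) j.
Proof.
have nz_fact : (j`!)%:R != 0 :> R by rewrite pnatr_eq0 -lt0n fact_gt0.
have nz_jS : j.+1%:R != 0 :> R by rewrite pnatr_eq0.
rewrite !gbinomE fallingSr fallingS factS natrM -natr1.
by field; rewrite nz_fact natr1 nz_jS.
Qed.

Lemma gbinom_alt_sum x j :
  \sum_(i < j.+1) gbinom x i * (-1) ^+ (j - i) = gbinom (x - 1) j.
Proof.
elim: j => [|j IHj]; first by rewrite big_ord1 mulr1 /gbinom !big_ord0.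
rewrite big_ord_recr /= subnn mulr1.
under eq_bigr => i _ do rewrite (@subSn i j (ltn_ord i)) exprS mulN1r mulrN.
by rewrite sumrN IHj gbinom_pascal addrC addrK.
Qed.

Lemma dsum_falling n x b :
  dsum n x b = \sum_(j < n.+1) falling (x - 1) j / falling (n%:R + b) j.
Proof.
apply: eq_bigr => j _.
under eq_bigr => i _ do rewrite mulrAC.
rewrite -mulr_suml gbinom_alt_sum !gbinomE invf_div mulrA divfK //.
by rewrite pnatr_eq0 -lt0n fact_gt0.
Qed.

End GeneralizedBinomial.

Section DoubleSum.

Variables (R : numFieldType) (n : nat) (b : R).
Hypothesis hb : forall m : nat, b != - (m.+1)%:R.

Lemma b_addSn_neq0 m : b + m.+1%:R != 0.
Proof. by rewrite addr_eq0. Qed.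

Lemma poch_b1_neq0 N : poch (b + 1) N != 0.
Proof. by apply/prodf_neq0 => i _; rewrite -addrA (addrC 1) natr1 b_addSn_neq0. Qed.

Lemma falling_nb_poch : falling (n%:R + b) n = poch (b + 1) n.
Proof. by rewrite addrC falling_shift_poch. Qed.

Lemma falling_nb_neq0 : falling (n%:R + b) n != 0.
Proof. by rewrite falling_nb_poch poch_b1_neq0. Qed.

Lemma dsum_poch a : a != b + 1 ->
  dsum n (n%:R + a + 1) b
  = (a - b - 1)^-1 * (poch a n.+1 / poch (b + 1) n - n%:R - b - 1).
Proof.
move=> neq_ab1.
have nz_ab1 : a - b - 1 != 0 by rewrite -addrA -opprD subr_eq0.
have falling_a : falling (n%:R + a) n.+1 = poch a n.+1.
  by rewrite (_ : n%:R + a = a - 1 + n.+1%:R) ?falling_shift_poch ?addrNK // -natr1; ring.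
have := falling_ratio_telescope (n%:R + a) _ _ falling_nb_neq0.
rewrite falling_a falling_nb_poch (_ : n%:R + a - (n%:R + b) - 1 = a - b - 1); last by ring.
move=> telescoped; rewrite dsum_falling addrK.
apply: (mulIf nz_ab1); rewrite mulr_suml telescoped.
by field; rewrite nz_ab1 poch_b1_neq0.
Qed.

Lemma dsum_diag : dsum n (n%:R + b + 1) b = n.+1%:R.
Proof.
have nz_bb1 : b != b + 1 by rewrite -subr_eq0 opprD addrA subrr sub0r oppr_eq0 oner_eq0.
rewrite dsum_poch // /poch big_ord_recl addr0.
under eq_bigr => i _ do rewrite /bump /= -natr1 addrA addrAC.
rewrite mulfK ?poch_b1_neq0 // -natr1.
by field; rewrite (_ : b - b - 1 = -1) ?oppr_eq0 ?oner_eq0 //; ring.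
Qed.

Lemma dsum_harmonic :
  dsum n (n%:R + b + 2) b = (n%:R + b + 1) * \sum_(k < n.+1) (b + k.+1%:R)^-1.
Proof.
set A := n%:R + b + 1.
have A_subn k : (k <= n)%N -> A - k%:R = b + (n - k).+1%:R.
  by move=> le_kn; rewrite /A -natr1 natrB //; ring.
rewrite dsum_falling (_ : n%:R + b + 2 - 1 = A); last by rewrite /A; ring.
rewrite mulr_sumr (reindex_inj rev_ord_inj) /=.
apply: eq_bigr => j _; rewrite subSS.
have le_nj_n : (n - j <= n)%N := leq_subr j n.
have -> : n%:R + b = A - 1 by rewrite /A addrK.
rewrite falling_ratio; first by rewrite A_subn // subKn // -ltnS.
  by rewrite /A addrK (falling_neq0_leq _ le_nj_n) // falling_nb_neq0.
by rewrite A_subn // b_addSn_neq0.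
Qed.

End DoubleSum.

Theorem mainTheorem11 (C : numClosedFieldType) (n : nat) (a b : C)
  (hb : forall m : nat, b != - (m.+1)%:R) :
  (a != b + 1 ->
     dsum n (n%:R + a + 1) b
     = (a - b - 1)^-1 * (poch a n.+1 / poch (b + 1) n - n%:R - b - 1))
  /\ (a = b -> dsum n (n%:R + a + 1) b = n.+1%:R)
  /\ (a = b + 1 ->
     dsum n (n%:R + b + 2) b
     = (n%:R + b + 1) * \sum_(k < n.+1) (b + k.+1%:R)^-1).
Proof.
split; first exact: dsum_poch.
split; first by move=> ->; exact: dsum_diag.
by move=> _; exact: dsum_harmonic.
Qed.
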